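(* Let $G$ be a finite simple graph and $k\ge 0$ an integer. If $Z_k(G)\le k$, then $Z_k(G)=Z(G)$.
   Context: Filling rule: if a filled vertex has exactly one unfilled neighbor (and any number of filled neighbors), that neighbor becomes filled; ''applying the filling rule in a subgraph $H$'' means applying it with neighborhoods taken in $H$. The $Z_q$-Game on $G$ ($q\ge 0$ an integer): initially all vertices are unfilled; a player repeatedly performs one of the following operations until all vertices are filled: (1) for one token, change any vertex from unfilled to filled; (2) at no cost, apply the filling rule in $G$; (3) if $F$ is the current set of filled vertices and $U_1,\dots,U_k$ are the vertex sets of the connected components of $G[V(G)\setminus F]$ with $k\ge q+1$, the player announces a selection of at least $q+1$ of the $U_i$ to an oracle (an adversary), the oracle returns a nonempty subset $\{U_{i_1},\dots,U_{i_\ell}\}$ of the selected components, and the player may at no cost apply the filling rule in $G[F\cup U_{i_1}\cup\cdots\cup U_{i_\ell}]$. $Z_q(G)$ is the minimum number of tokens with which the player can guarantee that all vertices become filled, regardless of the oracle's responses. The $Z$-Game is the same game with only operations (1) and (2) allowed, and $Z(G)$ (the zero forcing number) is the minimum number of tokens needed there to fill all vertices. *)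

From mathcomp Require Import all_boot.
Set Implicit Arguments. Unset Strict Implicit. Unset Printing Implicit Defensive.

(* A finite simple graph: vertex type T : finType, adjacency e : rel T,
   assumed symmetric and irreflexive in the theorem statement. *)

Section ZGames.
Variables (T : finType) (e : rel T).

(* Filling rule applied in the induced subgraph G[H] with current filled
   set F: filled vertex u in H whose only unfilled neighbour in G[H] is w;
   then w becomes filled. *)
Definition fill_step (H F : {set T}) (u w : T) : Prop :=
  [/\ u \in H, u \in F, w \in H, w \notin F & e u w] /\
  (forall x, x \in H -> e u x -> x != w -> x \in F).

Definition unfilled_adj (F : {set T}) : rel T :=
  fun x y => [&& e x y, x \notin F & y \notin F].

Definition components (F : {set T}) : {set {set T}} :=
  [set [set y | connect (unfilled_adj F) x y] | x in ~: F].

(* zq_win q t F : starting from filled set F, the player can guarantee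
   filling all vertices using at most t further tokens in the Z_q-Game. *)
Inductive zq_win (q : nat) : nat -> {set T} -> Prop :=
| zq_done t F : F = setT -> zq_win q t F
| zq_token t F v : zq_win q t (v |: F) -> zq_win q t.+1 F
| zq_force t F u w : fill_step setT F u w -> zq_win q t (w |: F) -> zq_win q t F
| zq_oracle t F (S : {set {set T}}) :
    S \subset components F -> q.+1 <= #|S| ->
    (forall R : {set {set T}}, R \subset S -> R != set0 ->
       zq_win q t F \/
       exists u w, fill_step (F :|: \bigcup_(U in R) U) F u w /\
                   zq_win q t (w |: F)) ->
    zq_win q t F.

Inductive z_win : nat -> {set T} -> Prop :=
| z_done t F : F = setT -> z_win t F
| z_token t F v : z_win t (v |: F) -> z_win t.+1 F
| z_force t F u w : fill_step setT F u w -> z_win t (w |: F) -> z_win t F.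

Definition is_Zq (q n : nat) : Prop :=
  zq_win q n set0 /\ forall m, zq_win q m set0 -> n <= m.

Definition is_Z (n : nat) : Prop :=
  z_win n set0 /\ forall m, z_win m set0 -> n <= m.

End ZGames.

From mathcomp Require Import all_boot.
From mathcomp Require Import zify.
Set Implicit Arguments. Unset Strict Implicit. Unset Printing Implicit Defensive.

(* Z_q(G) <= Z(G) because the Z-Game is the Z_q-Game without oracle moves.
   Conversely, call a filled vertex active if it has an unfilled neighbour, and
   follow a Z_q-strategy from a position with t tokens left and
   #active + t <= q.  A token raises #active by at most one and uses a token;
   a force never raises #active.  Before an oracle move on q+1 components, if
   every nonempty answer allowed a force, the forcing vertices would give at
   least q+1 distinct active vertices (an answer-by-answer peeling argument),
   which is impossible; so some answer allows no progress, and the strategy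
   must continue from the same position.  Hence the strategy never needs the
   oracle, and with Z_k(G) <= k tokens it is a Z-Game strategy from the empty
   set, where #active = 0. *)

Section ZqGames.
Variables (T : finType) (e : rel T).

Section NestedInduction.
Variables (q : nat) (P : nat -> {set T} -> Prop).
Hypothesis P_done : forall t F, F = setT -> P t F.
Hypothesis P_token : forall t F v, zq_win e q t (v |: F) -> P t (v |: F) -> P t.+1 F.
Hypothesis P_force : forall t F u w, fill_step e setT F u w ->
  zq_win e q t (w |: F) -> P t (w |: F) -> P t F.
Hypothesis P_oracle : forall t F (S : {set {set T}}),
  S \subset components e F -> q.+1 <= #|S| ->
  (forall R : {set {set T}}, R \subset S -> R != set0 ->
     P t F \/ exists u w, fill_step e (F :|: \bigcup_(U in R) U) F u w /\ P t (w |: F)) ->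
  P t F.

(* The generated principle of zq_win does not see the occurrences of zq_win
   under the disjunction of the oracle rule. *)
Fixpoint zq_win_nested_ind t F (h : zq_win e q t F) {struct h} : P t F :=
  match h in zq_win _ _ t F return P t F with
  | zq_done t _ hF => P_done t hF
  | zq_token _ _ _ hw => P_token hw (zq_win_nested_ind hw)
  | zq_force _ _ _ _ hf hw => P_force hf hw (zq_win_nested_ind hw)
  | zq_oracle _ _ _ hS hq hR => P_oracle hS hq (fun R RS R0 =>
      match hR R RS R0 with
      | or_introl hw => or_introl (zq_win_nested_ind hw)
      | or_intror (ex_intro u (ex_intro w (conj hf hw))) =>
          or_intror (ex_intro _ u (ex_intro _ w (conj hf (zq_win_nested_ind hw))))
      end)
  end.

End NestedInduction.

Lemma z_win_zq_win q t F : z_win e t F -> zq_win e q t F.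
Proof.
elim=> {t F} [t F ->|t F v _ IH|t F u w fs _ IH].
- exact: zq_done.
- exact: zq_token IH.
- exact: zq_force fs IH.
Qed.

Definition active (F : {set T}) : {set T} :=
  [set u in F | [exists x, e u x && (x \notin F)]].

Definition active_towards (F : {set T}) (S : {set {set T}}) : {set T} :=
  [set u in F | [exists x, [&& x \in \bigcup_(U in S) U, x \notin F & e u x]]].

Lemma active_set0 : active set0 = set0.
Proof. by apply/setP => u; rewrite !inE. Qed.

Lemma active_towards_sub F S : active_towards F S \subset active F.
Proof.
apply/subsetP => u; rewrite !inE => /andP[uF /existsP[x /and3P[_ xF eux]]].
by rewrite uF; apply/existsP; exists x; rewrite eux xF.
Qed.

Lemma card_active_setU1 F v : #|active (v |: F)| <= #|active F|.+1.
Proof.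
have sub : active (v |: F) \subset v |: active F.
  apply/subsetP => u; rewrite !inE => /andP[/orP[->//|uF] /existsP[x /andP[eux]]].
  rewrite inE negb_or => /andP[_ xF].
  by apply/orP; right; rewrite uF; apply/existsP; exists x; rewrite eux xF.
by have := subset_leq_card sub; rewrite cardsU1; lia.
Qed.

(* The forcing vertex u stops being active and only w can become active. *)
Lemma card_active_force F u w :
  fill_step e setT F u w -> #|active (w |: F)| <= #|active F|.
Proof.
case=> [[_ uF _ wF euw] u_only_w].
have ua : u \in active F by rewrite inE uF; apply/existsP; exists w; rewrite euw wF.
have sub : active (w |: F) \subset w |: (active F :\ u).
  apply/subsetP => y; rewrite !inE => /andP[/orP[->//|yF] /existsP[x /andP[eyx]]].
  rewrite !inE negb_or => /andP[xw xF].
  apply/orP; right; apply/andP; split.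
    by apply: contraNneq xF => yu; rewrite u_only_w ?inE -?yu.
  by rewrite yF; apply/existsP; exists x; rewrite eyx xF.
have := subset_leq_card sub; rewrite cardsU1 (cardsD1 u (active F)) ua; lia.
Qed.

(* Peeling: the answer S yields a force u0 -> w0 with w0 in some U0 of S; by
   disjointness u0 is adjacent to no unfilled vertex outside U0, so u0 is not
   counted in active_towards F (S :\ U0). *)
Lemma card_active_towards (F : {set T}) (P : Prop) n (S : {set {set T}}) :
  #|S| = n ->
  (forall U V, U \in S -> V \in S -> forall x, x \in U -> x \in V -> U = V) ->
  (forall R : {set {set T}}, R \subset S -> R != set0 ->
     P \/ exists u w, fill_step e (F :|: \bigcup_(U in R) U) F u w) ->
  P \/ #|S| <= #|active_towards F S|.
Proof.
elim: n S => [|n IH] S cS S_disj S_force; first by right; rewrite cS.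
have S0 : S != set0 by apply: contraTneq isT => S0; rewrite S0 cards0 in cS.
case: (S_force S (subxx S) S0) => [p|[u0 [w0 [[_ u0F w0H w0F eu0w0] u0_only_w0]]]].
  by left.
have /bigcupP[U0 U0S w0U0] : w0 \in \bigcup_(U in S) U.
  by move: w0H; rewrite inE (negbTE w0F).
have cS' : #|S :\ U0| = n by move: cS; rewrite (cardsD1 U0) U0S => -[].
have S'_disj U V : U \in S :\ U0 -> V \in S :\ U0 -> forall x, x \in U -> x \in V -> U = V.
  by move=> /setD1P[_ US] /setD1P[_ VS]; apply: S_disj.
have S'_force (R : {set {set T}}) : R \subset S :\ U0 -> R != set0 ->
    P \/ exists u w, fill_step e (F :|: \bigcup_(U in R) U) F u w.
  by move=> RS; apply: S_force; apply: subset_trans RS (subsetDl _ _).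
case: (IH (S :\ U0) cS' S'_disj S'_force) => [|le]; [by left | right].
have u0S : u0 \in active_towards F S.
  rewrite inE u0F; apply/existsP; exists w0; rewrite w0F eu0w0 !andbT.
  by apply/bigcupP; exists U0.
have sub : active_towards F (S :\ U0) \subset active_towards F S :\ u0.
  apply/subsetP => u; rewrite inE => /andP[uF /existsP[x /and3P[xS xF eux]]].
  move: xS => /bigcupP[V /setD1P[VU0 VS] xV].
  rewrite !inE uF /=; apply/andP; split.
    apply: contraNneq VU0 => uu0; rewrite -uu0 in u0_only_w0.
    have xw0 : x = w0.
      apply/eqP; apply: contraNT xF => xw0; apply: u0_only_w0 => //.
      by rewrite inE; apply/orP; right; apply/bigcupP; exists V.
    by rewrite xw0 in xV; rewrite (S_disj V U0 VS U0S w0).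
  by apply/existsP; exists x; rewrite xF eux !andbT; apply/bigcupP; exists V.
have := subset_leq_card sub; rewrite (cardsD1 u0 (active_towards F S)) u0S.
rewrite (cardsD1 U0 S) U0S; move: le; rewrite cS'; lia.
Qed.

Hypothesis e_sym : symmetric e.

Lemma components_eq F U V : U \in components e F -> V \in components e F ->
  forall x, x \in U -> x \in V -> U = V.
Proof.
have sym : connect_sym (unfilled_adj e F).
  by apply: sym_connect_sym => x y; rewrite /unfilled_adj e_sym [(x \notin F) && _]andbC.
move=> /imsetP[a _ ->] /imsetP[b _ ->] x; rewrite !inE => ax bx.
by apply/setP => y; rewrite !inE (same_connect sym ax) (same_connect sym bx).
Qed.

Lemma zq_win_z_win q t F :
  zq_win e q t F -> #|active F| + t <= q -> z_win e t F.
Proof.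
elim/zq_win_nested_ind => {t F}.
- by move=> t F -> _; exact: z_done.
- move=> t F v _ IH le; apply: z_token; apply: IH.
  by have := card_active_setU1 F v; lia.
- move=> t F u w fs _ IH le; apply: (z_force fs); apply: IH.
  by have := card_active_force fs; lia.
- move=> t F S Ssub cS S_answer le.
  have S_force : forall R : {set {set T}}, R \subset S -> R != set0 ->
      z_win e t F \/ exists u w, fill_step e (F :|: \bigcup_(U in R) U) F u w.
    move=> R RS R0; case: (S_answer R RS R0) => [p|[u [w [fs _]]]]; first by left; exact: p.
    by right; exists u, w.
  case: (card_active_towards (erefl #|S|) _ S_force) => // [U V US VS|cS_le].
    by apply: components_eq; apply: (subsetP Ssub).
  by have := subset_leq_card (active_towards_sub F S); lia.
Qed.

End ZqGames.

Theorem theorem2p2 (T : finType) (e : rel T) (e_sym : symmetric e)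
  (e_irr : irreflexive e) (k zk z : nat) :
  is_Zq e k zk -> is_Z e z -> zk <= k -> zk = z.
Proof.
move=> [win_zk min_zk] [win_z min_z] zk_le_k.
apply/eqP; rewrite eqn_leq; apply/andP; split.
- exact/min_zk/z_win_zq_win.
- by apply/min_z/(zq_win_z_win e_sym win_zk); rewrite active_set0 cards0.
Qed.
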